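(* Let $F$ be a once-punctured torus equipped with a point of the decorated super Teichmüller space $S\tilde T(F)$. For an ideal triangulation of $F$ with arcs having super $\lambda$-lengths $a,b,c$, define the super semi-perimeter \[ h=\frac{a}{bc}+\frac{b}{ac}+\frac{c}{ab}+\frac{W_a}{a}+\frac{W_b}{b}+\frac{W_c}{c}. \] Then $h$ is invariant under flips, i.e. it takes the same value for every ideal triangulation of $F$.
   Context: $S\tilde T(F)$ is the decorated $\mathrm{OSp}(1|2)$ super Teichmüller space (Penner–Zeitlin), with values in a real Grassmann algebra. A point assigns, for each ideal triangulation of $F$ (three disjoint non-isotopic ideal arcs cutting $F$ into two ideal triangles), an even $\lambda$-length with positive body to each arc (depending only on the arc), an odd $\mu$-invariant to each triangle, and a spin structure orienting each arc. For an arc $e$, $W_e=\theta_1\theta_2$ where $\theta_1,\theta_2$ are the $\mu$-invariants of the triangles adjacent to $e$ lying counter-clockwise and clockwise of $e$ relative to its spin orientation; $W_e$ does not depend on the triangulation containing $e$. Flipping $c$ in a triangulation $\{a,b,c\}$ (with triangle $\mu$-invariants $\theta,\sigma$) yields the arc $d$ with $cd=a^2+b^2+abW_c$, new $\mu$-invariants $\theta'=(b\theta+a\sigma)/\sqrt{a^2+b^2}$, $\sigma'=(b\sigma-a\theta)/\sqrt{a^2+b^2}$, and the spin orientation on $b$ reversed. *)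

From HB Require Import structures.
From mathcomp Require Import all_boot all_order all_algebra.
From mathcomp Require Import reals.
Set Implicit Arguments. Unset Strict Implicit. Unset Printing Implicit Defensive.
Import Order.TTheory GRing.Theory Num.Theory.
Local Open Scope ring_scope.

(* [L] is a real algebra with an even part and an odd part, a body map
   (augmentation) to the reals whose kernel is nil; this is satisfied by
   every real Grassmann algebra R[theta_1,...,theta_n] (and more). *)
Definition grassmann_parity (R : realType) (L : unitAlgType R)
    (even odd : L -> Prop) : Prop :=
  [/\ (forall x, exists y z, [/\ even y, odd z & x = y + z]),
      [/\ even 0, even 1, (forall x y, even x -> even y -> even (x + y)),
          (forall x y, even x -> even y -> even (x * y)) &
          (forall (k : R) x, even x -> even (k *: x))],
      [/\ odd 0, (forall x y, odd x -> odd y -> odd (x + y)),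
          (forall (k : R) x, odd x -> odd (k *: x)),
          (forall x y, odd x -> odd y -> even (x * y)) &
          (forall x y, even x -> odd y -> odd (x * y) /\ odd (y * x))],
      (forall x y, even x -> x * y = y * x) &
      (forall x y, odd x -> odd y -> x * y = - (y * x))].

Definition grassmann_body (R : realType) (L : unitAlgType R)
    (odd : L -> Prop) (body : L -> R) : Prop :=
  [/\ body 1 = 1, (forall x y, body (x + y) = body x + body y),
      (forall x y, body (x * y) = body x * body y),
      (forall (k : R) x, body (k *: x) = k * body x) &
      (forall x, odd x -> body x = 0) /\
      (forall x, body x = 0 -> exists n : nat, x ^+ n = 0)].

Definition real_grassmann (R : realType) (L : unitAlgType R)
    (even odd : L -> Prop) (body : L -> R) : Prop :=
  grassmann_parity even odd /\ grassmann_body odd body.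

(* An ideal arc of the once-punctured torus is determined by its slope, a
   primitive integer vector taken up to sign; we represent arcs by integer
   vectors (functions on arcs are required to be invariant under negation).
   Three arcs form an ideal triangulation iff their pairwise determinants
   are +-1 (Farey triangles). *)
Definition vec := (int * int)%type.
Definition vneg (u : vec) : vec := (- u.1, - u.2).
Definition vdet (u v : vec) : int := u.1 * v.2 - u.2 * v.1.

Definition triangulation (u v w : vec) : Prop :=
  [/\ `|vdet u v| = 1, `|vdet v w| = 1 & `|vdet u w| = 1].

(* Flipping the arc [w] in the triangulation {u,v,w} yields the arc [d]:
   the unique other arc (up to sign) completing {u,v} to a triangulation. *)
Definition is_flip (u v w d : vec) : Prop :=
  [/\ triangulation u v w, triangulation u v d, d <> w & d <> vneg w].

(* [lam e] is the super lambda-length of the arc e, [W e] the invariant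
   W_e = theta_1 theta_2 (independent of the triangulation containing e). *)
Definition super_teich_torus (R : realType) (L : unitAlgType R)
    (even odd : L -> Prop) (body : L -> R) (lam W : vec -> L) : Prop :=
  [/\ (forall e, lam (vneg e) = lam e /\ W (vneg e) = W e),
      (forall p q : int, coprimez p q -> even (lam (p, q)) /\ 0 < body (lam (p, q))),
      (* mu-invariants theta, sigma of the two triangles of each triangulation;
         every arc borders both triangles, and W_e = theta_1 theta_2 with
         {theta_1, theta_2} = {theta, sigma} ordered by the spin orientation *)
      (forall u v w, triangulation u v w ->
         exists theta sigma, [/\ odd theta, odd sigma &
           forall e, e = u \/ e = v \/ e = w ->
             W e = theta * sigma \/ W e = sigma * theta]) &
      (forall u v w d, is_flip u v w d ->
         lam w * lam d = lam u ^+ 2 + lam v ^+ 2 + lam u * lam v * W w)].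

Definition semiperimeter (R : realType) (L : unitAlgType R)
    (a b c Wa Wb Wc : L) : L :=
  a / (b * c) + b / (a * c) + c / (a * b) + Wa / a + Wb / b + Wc / c.

From HB Require Import structures.
From mathcomp Require Import all_boot all_order all_algebra.
From mathcomp Require Import reals.
From mathcomp Require Import zify ring lra.

Set Implicit Arguments.
Unset Strict Implicit.
Unset Printing Implicit Defensive.
Import Order.TTheory GRing.Theory Num.Theory.
Local Open Scope ring_scope.

(* The lambda-lengths are even with positive body, hence central and invertible,
   and [W_c] is a product of two odd elements, hence even.  Dividing the super
   Ptolemy relation [c d = a^2 + b^2 + a b W_c] by [a b c] therefore gives
   [a/(bc) + b/(ac) + W_c/c = d/(ab)], so [h = c/(ab) + d/(ab) + W_a/a + W_b/b].
   The reverse flip [d -> c] yields the same expression, symmetric in [c], [d]. *)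

Lemma vdet_coprimez (u v : vec) :
  `|vdet u v| = 1 -> coprimez u.1 u.2 /\ coprimez v.1 v.2.
Proof.
case: u v => [u1 u2] [v1 v2]; rewrite /vdet /= => det1.
set D := u1 * v2 - u2 * v1 in det1.
have DD : D * D = 1 by nia.
split; apply/coprimezP.
  by exists (D * v2, - (D * v1)); rewrite /= -DD /D; ring.
by exists (- (D * u2), D * u1); rewrite /= -DD /D; ring.
Qed.

Lemma unitr_1B_nilpotent (R : unitRingType) (m : R) (n : nat) :
  m ^+ n = 0 -> 1 - m \is a GRing.unit.
Proof.
move=> mn0; set S := \sum_(i < n) m ^+ i.
have mS : (m - 1) * S = -1 by rewrite -subrX1 mn0 sub0r.
have cmS : GRing.comm (m - 1) S.
  apply: commr_sum => i _; apply/commrX/commr_sym/commrB => //.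
  exact: commr1.
apply/unitrP; exists S; rewrite -opprB mulrN mulNr -cmS mS opprK.
by split.
Qed.

Lemma grassmann_body_unit (R : realType) (L : unitAlgType R)
    (odd : L -> Prop) (body : L -> R) (x : L) :
  grassmann_body odd body -> body x != 0 -> x \is a GRing.unit.
Proof.
case=> body1 bodyD _ bodyZ [_ body0_nil] bx0.
have bodyN y : body (- y) = - body y.
  have body0 : body 0 = 0 by have := bodyD 0 0; rewrite addr0; lra.
  by have := bodyD (- y) y; rewrite addNr body0; lra.
set m := 1 - (body x)^-1 *: x.
have [n mn0] : exists n, m ^+ n = 0.
  by apply: body0_nil; rewrite bodyD bodyN bodyZ body1 mulVf // subrr.
have -> : x = body x *: (1 - m).
  by rewrite /m opprB addrC subrK scalerA divff // scale1r.
by rewrite scaler_unit ?unitfE //; exact: unitr_1B_nilpotent mn0.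
Qed.

Lemma is_flip_sym (u v w d : vec) : is_flip u v w d -> is_flip u v d w.
Proof.
case=> tw td dw dnw; split=> // [wd|wnd]; first exact/dw.
by apply: dnw; rewrite wnd /vneg !opprK; case: (d).
Qed.

Lemma ptolemy_divE (R : unitRingType) (a b c d W : R) :
  a \is a GRing.unit -> b \is a GRing.unit -> c \is a GRing.unit ->
  GRing.comm a b -> GRing.comm a c -> GRing.comm b c ->
  GRing.comm W a -> GRing.comm W b -> GRing.comm W c ->
  c * d = a ^+ 2 + b ^+ 2 + a * b * W ->
  a / (b * c) + b / (a * c) + W / c = d / (a * b).
Proof.
move=> ua ub uc cab cac cbc cWa cWb cWc ptolemy.
have uab : a * b \is a GRing.unit by rewrite unitrMl.
have cVa : GRing.comm c^-1 a by apply/commr_sym/commrV.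
have cVb : GRing.comm c^-1 b by apply/commr_sym/commrV.
have cVW : GRing.comm c^-1 W by apply/commr_sym/commrV.
rewrite -[d](mulKr uc) ptolemy.
apply: (mulIr uab); rewrite divrK // !mulrDl !mulrDr.
congr (_ + _ + _).
- rewrite invrM // cab -!mulrA mulKr // cVa mulrA -expr2.
  exact/commr_sym/commrX.
- rewrite invrM // -!mulrA mulKr // cVb mulrA -expr2.
  exact/commr_sym/commrX.
- by rewrite -cVW -mulrA (commrM cWa cWb).
Qed.

Lemma semiperimeterE (R : realType) (L : unitAlgType R) (a b c Wa Wb Wc : L) :
  semiperimeter a b c Wa Wb Wc
  = (a / (b * c) + b / (a * c) + Wc / c) + c / (a * b) + (Wa / a + Wb / b).
Proof. by rewrite /semiperimeter addrA -!(addrAC _ (Wc / c)). Qed.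

Section TorusFlip.

Variables (R : realType) (L : unitAlgType R).
Variables (even odd : L -> Prop) (body : L -> R) (lam W : vec -> L).
Hypothesis grassmannL : real_grassmann even odd body.
Hypothesis teich : super_teich_torus even odd body lam W.

Lemma even_comm (x y : L) : even x -> GRing.comm x y.
Proof. by case: grassmannL => -[_ _ _ evenC _] _; apply: evenC. Qed.

Lemma lam_even_unit (e : vec) :
  coprimez e.1 e.2 -> even (lam e) /\ lam e \is a GRing.unit.
Proof.
case: teich => _ lam_pos _ _; case: e => e1 e2 /= /lam_pos [lam_ev body_pos].
by split=> //; apply: (grassmann_body_unit grassmannL.2); rewrite gt_eqF.
Qed.

Lemma triangulation_W_even (u v w : vec) : triangulation u v w -> even (W w).
Proof.
case: grassmannL => -[_ _ [_ _ _ oddM _] _ _] _.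
case: teich => _ _ /(_ u v w) mu_invariants _ /mu_invariants [th [sg [oth osg Wth]]].
by case: (Wth w (or_intror (or_intror erefl))) => ->; apply: oddM.
Qed.

Lemma flip_ptolemy_divE (u v w d : vec) : is_flip u v w d ->
  lam u / (lam v * lam w) + lam v / (lam u * lam w) + W w / lam w
  = lam d / (lam u * lam v).
Proof.
move=> flip_wd; have [tri_uvw _ _ _] := flip_wd; have [uv1 vw1 _] := tri_uvw.
have [/lam_even_unit [eu uu] /lam_even_unit [ev uv]] := vdet_coprimez uv1.
have [_ /lam_even_unit [ew uw]] := vdet_coprimez vw1.
have eW := triangulation_W_even tri_uvw.
apply: ptolemy_divE => //; try exact: even_comm.
by case: teich => _ _ _ /(_ u v w d flip_wd).
Qed.

End TorusFlip.

Theorem proposition4p2 (R : realType) (L : unitAlgType R)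
    (even odd : L -> Prop) (body : L -> R) (lam W : vec -> L) :
  real_grassmann even odd body ->
  super_teich_torus even odd body lam W ->
  forall u v w d : vec, is_flip u v w d ->
    semiperimeter (lam u) (lam v) (lam w) (W u) (W v) (W w)
    = semiperimeter (lam u) (lam v) (lam d) (W u) (W v) (W d).
Proof.
move=> grassmannL teich u v w d flip_wd.
rewrite !semiperimeterE (flip_ptolemy_divE grassmannL teich flip_wd).
rewrite (flip_ptolemy_divE grassmannL teich (is_flip_sym flip_wd)).
by rewrite [lam d / _ + _]addrC.
Qed.
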